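(* Let $r$ be a positive integer and suppose $1/(r+1)<\vartheta<1$. Let $(Z_t)$ be the random walk of the context with $c=1$, and let $\varrho\in(0,1)$ be the unique solution in $[0,1)$ of $\varrho=(1-\vartheta)+\vartheta\varrho^{r+1}$. Let $\varphi(z):=\mathbb{E}[z^{\tau(1)}\mathbf{1}\{\tau(1)<\infty\}]$ for $z\in[-1,1]$; it satisfies $\varphi(z)=z(1-\vartheta)+z\vartheta\varphi(z)^{r+1}$. Then for all $u\in\mathbb{N}$, $$\mathbb{E}[\tau(u)\mid\tau(u)<\infty]=u\,\frac{\varphi'(1)}{\varrho}=\frac{u\varrho}{(1-\vartheta)(r+1)-r\varrho},$$ where $\varphi'(1)$ is the derivative from below. In particular, for the single-agent trust model with prior parameters $\alpha,\beta\in\mathbb{N}$ and $c=1$, the expected quitting time conditional on quitting is $q(\alpha,\beta,1,r,\vartheta)=\mathbb{E}[\tau(u_{\rm crit})\mid\tau(u_{\rm crit})<\infty]$ with $u_{\rm crit}=r\alpha-\beta+1$.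
   Context: Random walk: for $\vartheta\in(0,1)$ and positive integers $c,r$, let $Z_0=0$ and $Z_t=Z_{t-1}+\Delta_t$ with $\Delta_t$ i.i.d., $\Delta_t=+c$ with probability $1-\vartheta$ and $-r$ with probability $\vartheta$. Define $\tau(u):=\inf\{t\in\mathbb{N}_0: Z_t\ge u\}$. Single-agent trust model: $(X_t)$ i.i.d. Bernoulli$(\vartheta)$; $\hat S_t=\sum_{s\le t}X_s\mathbf{1}_{\{A_s=1\}}$, $\hat F_t=\sum_{s\le t}(1-X_s)\mathbf{1}_{\{A_s=1\}}$, $\hat\vartheta_t=\frac{\alpha+\hat S_t}{\alpha+\beta+\hat S_t+\hat F_t}$; $A_t=1$ iff $r\hat\vartheta_n-c(1-\hat\vartheta_n)\ge0$ for all $n\le t-1$; $\tau:=\inf\{t: r\hat\vartheta_t-c(1-\hat\vartheta_t)<0\}$ (the first $t$ with $c\hat F_t-r\hat S_t\ge r\alpha-c\beta+1$); $q(\alpha,\beta,c,r,\vartheta):=\mathbb{E}[\tau\mid\tau<\infty]$. *)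

From HB Require Import structures.
From mathcomp Require Import all_boot all_order all_algebra.
From mathcomp Require Import all_classical all_reals all_analysis.
Set Implicit Arguments. Unset Strict Implicit. Unset Printing Implicit Defensive.
Import Order.TTheory GRing.Theory Num.Theory.
Local Open Scope ring_scope.

(* An outcome sequence s = [:: X_1; ...; X_t] of i.i.d. Bernoulli(theta)
   variables; [true] (probability theta) is a "success" X = 1 and
   [false] (probability 1 - theta) a "failure" X = 0. *)
Definition seqprob {R : realType} (theta : R) (s : seq bool) : R :=
  \prod_(b <- s) (if b then theta else 1 - theta).

(* P(stopping time = t), for a stopping rule given by [stop s] = "the
   stopping time equals size s on any outcome path beginning with s". *)
Definition Pstop {R : realType} (stop : seq bool -> bool) (theta : R) (t : nat) : R :=
  \sum_(s : t.-tuple bool) seqprob theta s * (stop s)%:R.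

Definition Pfin {R : realType} (stop : seq bool -> bool) (theta : R) : \bar R :=
  (\sum_(t <oo) (Pstop stop theta t)%:E)%E.

Definition Efin {R : realType} (stop : seq bool -> bool) (theta : R) : \bar R :=
  (\sum_(t <oo) (t%:R * Pstop stop theta t)%:E)%E.

Definition cond_exp {R : realType} (stop : seq bool -> bool) (theta : R) : \bar R :=
  (Efin stop theta * ((fine (Pfin stop theta))^-1)%:E)%E.

Definition Zwalk (c r : nat) (n : nat) (s : seq bool) : int :=
  \sum_(i < n) (if nth false s i then - (r%:Z) else c%:Z).

Definition walk_hit (c r : nat) (u : int) (s : seq bool) : bool :=
  (u <= Zwalk c r (size s) s) && all (fun k => Zwalk c r k s < u) (iota 0 (size s)).

Definition phi {R : realType} (r : nat) (theta : R) (z : R) : R :=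
  limn (fun n => \sum_(t < n) Pstop (walk_hit 1 r 1) theta t * z ^+ t).

(* state after processing the outcomes s: (S_hat, F_hat, A) where A is the
   indicator A_{size s} that the agent acted in the last round
   (A = true initially, i.e. A_0 is irrelevant). *)
Definition theta_hat {R : realType} (alpha beta : nat) (Sh Fh : nat) : R :=
  (alpha + Sh)%:R / (alpha + beta + Sh + Fh)%:R.

Definition trust_ok {R : realType} (alpha beta c r : nat) (Sh Fh : nat) : bool :=
  0 <= r%:R * theta_hat alpha beta Sh Fh - c%:R * (1 - theta_hat (R:=R) alpha beta Sh Fh).

Definition trust_step {R : realType} (alpha beta c r : nat)
    (st : nat * nat * bool) (x : bool) : nat * nat * bool :=
  let: (Sh, Fh, act) := st in
  (* A_t = 1 iff the criterion held at all n <= t-1 *)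
  let act' := act && trust_ok (R:=R) alpha beta c r Sh Fh in
  (Sh + (x && act'), Fh + (~~ x && act'), act').

Definition trust_state {R : realType} (alpha beta c r : nat) (s : seq bool) :
    nat * nat * bool := foldl (trust_step (R:=R) alpha beta c r) (0%N, 0%N, true) s.

Definition trust_ok_at {R : realType} (alpha beta c r : nat) (n : nat) (s : seq bool) : bool :=
  let: (Sh, Fh, _) := trust_state (R:=R) alpha beta c r (take n s) in
  trust_ok (R:=R) alpha beta c r Sh Fh.

Definition trust_quit {R : realType} (alpha beta c r : nat) (s : seq bool) : bool :=
  ~~ trust_ok_at (R:=R) alpha beta c r (size s) s &&
  all (fun n => trust_ok_at (R:=R) alpha beta c r n s) (iota 0 (size s)).

Definition q {R : realType} (alpha beta c r : nat) (theta : R) : \bar R :=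
  cond_exp (trust_quit (R:=R) alpha beta c r) theta.

(* Let p_a(t) = P(tau(a) = t) for the walk with c = 1.  Conditioning on the
   first step gives p_{a+1}(t+1) = (1 - theta) p_a(t) + theta p_{a+1+r}(t), and
   since upward steps have size 1, reaching level a + b means reaching a and then
   climbing b more, so p_{a+b} is the convolution of p_a and p_b.  Hence the
   generating functions satisfy G_a = G_1^a and
   G_1(z) = z (1 - theta) + z theta G_1(z)^(r+1).  At z = 1, G_1(1) = P(tau(1) < oo)
   is a root of the fixed-point equation lying in [0, rho], where rho is the only
   root, so P(tau(u) < oo) = rho^u.  The means m_a = E[tau(a); tau(a) < oo] are
   finite, satisfy m_{a+b} = m_a rho^b + rho^a m_b, hence m_u = u rho^(u-1) m_1, and
   the first step gives m_1 = rho + theta m_{1+r}, whence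
   m_1 = rho^2 / ((1 - theta)(r + 1) - r rho).  Since p_1 >= 0, m_1 is also the left
   derivative of G_1 at 1.  In the trust model, the quitting criterion at time t
   reads c F_t - r S_t >= r alpha - c beta + 1, which is the hitting of that level
   by the walk. *)

From HB Require Import structures.
From mathcomp Require Import all_boot all_order all_algebra.
From mathcomp Require Import all_classical all_reals all_analysis.
From mathcomp Require Import zify ring.
Set Implicit Arguments. Unset Strict Implicit. Unset Printing Implicit Defensive.
Import Order.TTheory GRing.Theory Num.Theory numFieldNormedType.Exports.
Local Open Scope ring_scope.
Local Open Scope classical_set_scope.

Lemma sum_tuple0 (R : nmodType) (T : finType) (F : 0.-tuple T -> R) :
  \sum_(s : 0.-tuple T) F s = F [tuple].
Proof. by rewrite (big_pred1 [tuple]) // => s; apply/esym/eqP/tuple0. Qed.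

Lemma sum_tupleS (R : nmodType) (T : finType) t (F : t.+1.-tuple T -> R) :
  \sum_(s : t.+1.-tuple T) F s = \sum_(x : T) \sum_(s : t.-tuple T) F [tuple of x :: s].
Proof.
rewrite pair_big /= (reindex (fun p : T * t.-tuple T => [tuple of p.1 :: p.2])) //=.
exists (fun s : t.+1.-tuple T => (thead s, [tuple of behead s])).
  by move=> [x s] _ /=; congr pair; apply: val_inj.
by move=> s _; rewrite [RHS]tuple_eta; apply: val_inj.
Qed.

Lemma Zwalk0 c r s : Zwalk c r 0 s = 0.
Proof. by rewrite /Zwalk big_ord0. Qed.

Lemma ZwalkS c r k b s :
  Zwalk c r k.+1 (b :: s) = (if b then - (r%:Z) else c%:Z) + Zwalk c r k s.
Proof. by rewrite /Zwalk big_ord_recl. Qed.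

Lemma walk_hit_cons c r u b s :
  walk_hit c r u (b :: s) = (0 < u) && walk_hit c r (u - (if b then - (r%:Z) else c%:Z)) s.
Proof.
rewrite /walk_hit /= ZwalkS Zwalk0 (iotaDl 1 0) all_map.
under eq_all => k do rewrite /= add1n ZwalkS -ltrBrDl.
by rewrite andbCA -lerBlDl.
Qed.

Section FirstStep.
Variables (R : realType) (c r : nat) (theta : R).

Definition hitting (u : int) (t : nat) : R := Pstop (walk_hit c r u) theta t.

Lemma hitting0 u : hitting u 0 = ((u <= 0)%R)%:R.
Proof.
by rewrite /hitting /Pstop sum_tuple0 /seqprob big_nil mul1r /walk_hit Zwalk0 andbT.
Qed.

Lemma hittingS_le0 u t : u <= 0 -> hitting u t.+1 = 0.
Proof.
move=> u_le0; rewrite /hitting /Pstop sum_tupleS big1 // => b _.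
by rewrite big1 // => s _; rewrite walk_hit_cons ltNge u_le0 mulr0.
Qed.

Lemma hitting_step u t : 0 < u ->
  hitting u t.+1 = (1 - theta) * hitting (u - c%:Z) t + theta * hitting (u + r%:Z) t.
Proof.
move=> u_gt0; rewrite /hitting /Pstop sum_tupleS big_bool addrC !mulr_sumr.
by congr (_ + _); apply: eq_bigr => s _;
  rewrite walk_hit_cons u_gt0 /seqprob big_cons ?opprK mulrA.
Qed.

End FirstStep.

Lemma all_iotaS (P : pred nat) n : all P (iota 0 n.+1) = all P (iota 0 n) && P n.
Proof. by rewrite -addn1 iotaD all_cat /= andbT. Qed.

Section TrustModel.
Variables (R : realType) (alpha beta c r : nat).
Hypothesis alpha_beta_gt0 : (0 < alpha + beta)%N.

Let u_crit : int := r%:Z * alpha%:Z - c%:Z * beta%:Z + 1.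

Lemma trust_okE Sh Fh :
  trust_ok (R:=R) alpha beta c r Sh Fh = (c%:Z * Fh%:Z - r%:Z * Sh%:Z < u_crit).
Proof.
have sign_crit (a n : nat) : (0 < n)%N ->
    (0 <= r%:R * (a%:R / n%:R) - c%:R * (1 - a%:R / n%:R) :> R) = (c * n <= r * a + c * a)%N.
  move=> n_gt0; have n_neq0 : n%:R != 0 :> R by rewrite pnatr_eq0 -lt0n.
  have -> : r%:R * (a%:R / n%:R) - c%:R * (1 - a%:R / n%:R) =
            ((r * a + c * a)%:R - (c * n)%:R) / n%:R :> R.
    by rewrite natrD !natrM; field.
  by rewrite pmulr_lge0 ?invr_gt0 ?ltr0n // subr_ge0 ler_nat.
rewrite /trust_ok /theta_hat sign_crit; last by lia.
by apply/idP/idP; nia.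
Qed.

Lemma trust_state_walk s n : (n <= size s)%N ->
  all (fun k => Zwalk c r k s < u_crit) (iota 0 n) ->
  exists Sh Fh, trust_state (R:=R) alpha beta c r (take n s) = (Sh, Fh, true) /\
                c%:Z * Fh%:Z - r%:Z * Sh%:Z = Zwalk c r n s.
Proof.
elim: n => [|n IHn] n_le; first by exists 0%N, 0%N; rewrite take0 Zwalk0 !mulr0 subr0.
rewrite all_iotaS => /andP[walk_lt walk_n_lt].
have [Sh [Fh [state_n walk_n]]] := IHn (ltnW n_le) walk_lt.
rewrite (take_nth false n_le) /trust_state foldl_rcons -/(trust_state _ _ _ _ _) state_n /=.
rewrite trust_okE walk_n walk_n_lt /=.
exists (Sh + nth false s n)%N, (Fh + ~~ nth false s n)%N; split; first by rewrite !andbT.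
rewrite /Zwalk big_ord_recr /= -/(Zwalk c r n s) -walk_n.
by case: (nth false s n) => /=; lia.
Qed.

Lemma trust_quit_walk_hit : trust_quit (R:=R) alpha beta c r =1 walk_hit c r u_crit.
Proof.
move=> s; suff agree n : (n <= size s)%N ->
    all (fun k => trust_ok_at (R:=R) alpha beta c r k s) (iota 0 n) =
    all (fun k => Zwalk c r k s < u_crit) (iota 0 n) /\
    (all (fun k => Zwalk c r k s < u_crit) (iota 0 n) ->
       trust_ok_at (R:=R) alpha beta c r n s = (Zwalk c r n s < u_crit)).
  rewrite /trust_quit /walk_hit; have [-> ok_size] := agree _ (leqnn (size s)).
  case: (boolP (all _ _)) => [walk_lt|]; last by rewrite !andbF.
  by rewrite ok_size // -leNgt.
elim: n => [|n IHn] n_le.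
  by split=> // _; rewrite /trust_ok_at take0 /= trust_okE Zwalk0 !mulr0 subr0.
have [IH1 IH2] := IHn (ltnW n_le); rewrite !all_iotaS IH1.
case: (boolP (all _ _)) => [walk_lt|] /=; last by split.
rewrite (IH2 walk_lt); split=> // walk_n_lt.
have walk_le_n : all (fun k => Zwalk c r k s < u_crit) (iota 0 n.+1).
  by rewrite all_iotaS walk_lt walk_n_lt.
have [Sh [Fh [state walk]]] := trust_state_walk n_le walk_le_n.
by rewrite /trust_ok_at state trust_okE walk.
Qed.

End TrustModel.

Section SkipFreeHitting.
Variables (R : realType) (r : nat) (theta : R).

Definition hitn (a t : nat) : R := hitting 1 r theta a%:Z t.

Lemma hitn0 t : hitn 0 t = (t == 0%N)%:R.
Proof. by case: t => [|t]; rewrite /hitn ?hitting0 ?hittingS_le0. Qed.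

Lemma hitnS0 a : hitn a.+1 0 = 0.
Proof. by rewrite /hitn hitting0. Qed.

Lemma hitnSS a t : hitn a.+1 t.+1 = (1 - theta) * hitn a t + theta * hitn (a.+1 + r) t.
Proof.
by rewrite /hitn hitting_step //; congr (_ * hitting _ _ _ _ _ + _ * hitting _ _ _ _ _); lia.
Qed.

Lemma hitnD a b t : hitn (a + b) t = \sum_(i < t.+1) hitn a i * hitn b (t - i).
Proof.
elim: t a b => [|t IHt] [|a] b.
- by rewrite big_ord1 hitn0 mul1r.
- by rewrite big_ord1 addSn !hitnS0 mul0r.
- by rewrite big_ord_recl hitn0 mul1r subn0 big1 ?addr0 // => i _; rewrite hitn0 mul0r.
rewrite big_ord_recl hitnS0 mul0r add0r.
under eq_bigr => i _ do rewrite subSS hitnSS mulrDl -!mulrA.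
by rewrite big_split /= -!mulr_sumr -!IHt addSn hitnSS addnAC.
Qed.

End SkipFreeHitting.

Section Series.
Variable R : realType.
Implicit Types a b f : R ^nat.

Definition conv a b : R ^nat := fun t => \sum_(i < t.+1) a i * b (t - i)%N.

Lemma series0 f : series f 0 = 0.
Proof. by rewrite /series /= big_nil. Qed.

Lemma seriesSl f n : series f n.+1 = f 0%N + series (fun t => f t.+1) n.
Proof. by rewrite !seriesEord /= big_ord_recl. Qed.

Lemma series_conv a b n : series (conv a b) n = \sum_(i < n) a i * series b (n - i)%N.
Proof.
elim: n => [|n IHn]; first by rewrite series0 big_ord0.
rewrite seriesSr IHn /conv big_ord_recr [in RHS]big_ord_recr /= subnn subSnn.
rewrite seriesS series0 addr0 addrA -big_split /=; congr (_ + _).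
by apply: eq_bigr => i _; rewrite subSn 1?ltnW // seriesSr mulrDr.
Qed.

Lemma le_nnseries f m n : (forall t, 0 <= f t) -> (m <= n)%N -> series f m <= series f n.
Proof. by move=> f_ge0; apply: nondecreasing_series. Qed.

Lemma nnseries_le_lim f : (forall t, 0 <= f t) -> cvgn (series f) ->
  forall n, series f n <= limn (series f).
Proof. by move=> f_ge0; apply: nondecreasing_cvgn_le; exact: nondecreasing_series. Qed.

Lemma nnseries_bounded_cvg f B : (forall t, 0 <= f t) -> (forall n, series f n <= B) ->
  cvgn (series f).
Proof.
move=> f_ge0 f_le; apply: nondecreasing_is_cvgn; first exact: nondecreasing_series.
by exists B => _ [n _ <-].
Qed.

Lemma sum_EFin_cvg f (l : R) : series f @ \oo --> l -> (\sum_(t <oo) (f t)%:E)%E = l%:E.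
Proof.
move=> f_cvg; rewrite (_ : (fun n => \sum_(0 <= t < n) (f t)%:E)%E = EFin \o series f).
  by rewrite EFin_lim ?(cvg_lim _ f_cvg) //; exact: cvgP f_cvg.
by apply: funext => n /=; rewrite sumEFin.
Qed.

Lemma cvg_series_conv_nn a b (A B : R) : (forall t, 0 <= a t) -> (forall t, 0 <= b t) ->
  series a @ \oo --> A -> series b @ \oo --> B -> series (conv a b) @ \oo --> A * B.
Proof.
move=> a_ge0 b_ge0 a_cvg b_cvg.
have conv_ge0 t : 0 <= conv a b t by apply: sumr_ge0 => i _; rewrite mulr_ge0.
have series_ge0 f n : (forall t, 0 <= f t) -> 0 <= series f n by move=> ?; exact: sumr_ge0.
have le_lim f L : (forall t, 0 <= f t) -> series f @ \oo --> L -> forall n, series f n <= L.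
  move=> f_ge0 f_cvg n; rewrite -(cvg_lim _ f_cvg) //.
  by apply: nnseries_le_lim => //; exact: cvgP f_cvg.
have conv_le_prod n : series (conv a b) n <= series a n * series b n.
  rewrite series_conv (@seriesEord _ a) /= mulr_suml; apply: ler_sum => i _.
  by rewrite ler_wpM2l // le_nnseries // leq_subr.
have prod_le_conv n : series a n * series b n <= series (conv a b) (n + n).
  rewrite series_conv; set g := fun i => a i * series b (n + n - i)%N.
  have g_ge0 t : 0 <= g t by rewrite mulr_ge0 ?series_ge0.
  have := le_nnseries g_ge0 (leq_addr n n); rewrite !(@seriesEord _ g) /=.
  apply: le_trans; rewrite (@seriesEord _ a) /= mulr_suml; apply: ler_sum => i _.
  by rewrite /g ler_wpM2l // le_nnseries //; move: (ltn_ord i); lia.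
have conv_cvg : cvgn (series (conv a b)).
  apply: (@nnseries_bounded_cvg _ (A * B)) => // n; apply: le_trans (conv_le_prod n) _.
  by apply: ler_pM; rewrite ?series_ge0 ?le_lim.
suff -> : A * B = limn (series (conv a b)) by [].
apply/eqP; rewrite eq_le; apply/andP; split.
  apply: (ler_cvg_to (cvgM a_cvg b_cvg) (cvg_cst _)); apply: nearW => n.
  by apply: le_trans (prod_le_conv n) _; exact: nnseries_le_lim.
apply: limr_le => //; apply: nearW => n; apply: le_trans (conv_le_prod n) _.
by apply: ler_pM; rewrite ?series_ge0 ?le_lim.
Qed.

Lemma cvg_series_conv a b :
  cvgn (series (fun t => `|a t|)) -> cvgn (series (fun t => `|b t|)) ->
  series (conv a b) @ \oo --> limn (series a) * limn (series b).
Proof.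
move=> a_abs b_abs; have a_cvg := normed_cvg a_abs; have b_cvg := normed_cvg b_abs.
set a' := fun t => `|a t|; set b' := fun t => `|b t|.
have abs_conv_cvg := cvg_series_conv_nn (fun t => normr_ge0 (a t)) (fun t => normr_ge0 (b t))
  a_abs b_abs.
pose gap f g n := series f n * series g n - series (conv f g) n.
have gap_series f g n : gap f g n = \sum_(i < n) f i * (series g n - series g (n - i)%N).
  rewrite /gap series_conv (@seriesEord _ f) /= mulr_suml -sumrB.
  by under eq_bigr do rewrite mulrBr.
have gap_le n : `|gap a b n| <= gap a' b' n.
  rewrite !gap_series; apply: le_trans (ler_norm_sum _ _ _) _; apply: ler_sum => i _.
  rewrite normrM ler_wpM2l // !sub_series_geq ?leq_subr //.
  exact: ler_norm_sum.
have gap_abs_cvg : gap a' b' @ \oo --> 0.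
  by rewrite -(subrr (limn (series a') * limn (series b'))); apply: cvgB => //; exact: cvgM.
have gap_cvg : gap a b @ \oo --> 0.
  apply: (squeeze_cvgr (f := - gap a' b') (h := gap a' b')); last exact: gap_abs_cvg.
    by apply: nearW => n; rewrite -ler_norml.
  by rewrite -oppr0; exact: cvgN gap_abs_cvg.
have conv_eq n : series a n * series b n - gap a b n = series (conv a b) n.
  by rewrite /gap opprB addrC subrK.
rewrite -(eq_cvg _ _ conv_eq) -(subr0 (_ * _)).
by apply: cvgB gap_cvg; exact: cvgM.
Qed.

End Series.

Lemma subr1X (R : comPzRingType) (z : R) n : 1 - z ^+ n = (1 - z) * \sum_(k < n) z ^+ k.
Proof.
rewrite -[1 in LHS](expr1n R n) subrXX; congr (_ * _).
by apply: eq_bigr => k _; rewrite expr1n mul1r.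
Qed.

Lemma onem_exp_le (R : realDomainType) (z : R) k : 0 <= z <= 1 -> 1 - z ^+ k <= k%:R * (1 - z).
Proof.
move=> /andP[z_ge0 z_le1]; elim: k => [|k IHk]; first by rewrite expr0 subrr mul0r.
have -> : 1 - z ^+ k.+1 = (1 - z ^+ k) + z ^+ k * (1 - z) by rewrite exprSr; ring.
by rewrite -natr1 mulrDl mul1r lerD // ler_piMl ?subr_ge0 ?exprn_ile1.
Qed.

Lemma geom_sum_deficit (R : realDomainType) (z : R) t : 0 <= z <= 1 ->
  [/\ 0 <= t%:R - \sum_(k < t) z ^+ k, t%:R - \sum_(k < t) z ^+ k <= t%:R &
      t%:R - \sum_(k < t) z ^+ k <= (1 - z) * t%:R ^+ 2].
Proof.
move=> z01; have /andP[z_ge0 z_le1] := z01.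
have -> : t%:R - \sum_(k < t) z ^+ k = \sum_(k < t) (1 - z ^+ k).
  by rewrite sumrB sumr_const card_ord.
split; first by apply: sumr_ge0 => k _; rewrite subr_ge0 exprn_ile1.
  apply: (@le_trans _ _ (\sum_(k < t) (1 : R))); last by rewrite sumr_const card_ord.
  by apply: ler_sum => k _; rewrite gerBl exprn_ge0.
apply: (@le_trans _ _ (\sum_(k < t) t%:R * (1 - z))).
  apply: ler_sum => k _; apply: le_trans (onem_exp_le k z01) _.
  by rewrite ler_wpM2r ?subr_ge0 // ler_nat ltnW.
by rewrite sumr_const card_ord -[_ *+ t]mulr_natr [X in _ <= X]mulrC expr2 mulrAC.
Qed.

Section DifferenceQuotientAtOne.
Variables (R : realType) (a : R ^nat).
Hypothesis a_ge0 : forall t, 0 <= a t.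
Hypothesis mass_cvg : cvgn (series a).
Hypothesis moment_cvg : cvgn (series (fun t => t%:R * a t)).

Let A (z : R) := limn (series (fun t => a t * z ^+ t)).
Let moment := limn (series (fun t => t%:R * a t)).
Let deficit (z : R) t := t%:R - \sum_(k < t) z ^+ k.

Lemma powser01_cvg (z : R) : 0 <= z <= 1 -> cvgn (series (fun t => a t * z ^+ t)).
Proof.
move=> /andP[z_ge0 z_le1]; apply: (series_le_cvg _ a_ge0 _ mass_cvg) => t.
  by rewrite mulr_ge0 ?exprn_ge0.
by rewrite ler_piMr ?exprn_ile1.
Qed.

Lemma series_deficit_cvg (z : R) : 0 <= z < 1 ->
  series (fun t => a t * deficit z t) @ \oo --> moment - (A 1 - A z) / (1 - z).
Proof.
move=> /andP[z_ge0 z_lt1]; have z_neq1 : 1 - z != 0 by rewrite subr_eq0 gt_eqF.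
have split_deficit n : series (fun t => t%:R * a t) n -
    (series (fun t => a t * 1 ^+ t) n - series (fun t => a t * z ^+ t) n) / (1 - z) =
    series (fun t => a t * deficit z t) n.
  rewrite !seriesEord /= -sumrB mulr_suml -sumrB; apply: eq_bigr => t _.
  by rewrite /deficit -mulrBr expr1n subr1X; field.
rewrite -(eq_cvg _ _ split_deficit); apply: cvgB => //; apply: cvgM; last exact: cvg_cst.
by apply: cvgB; apply: powser01_cvg; rewrite ?z_ge0 ?ler01 ?lexx ?ltW.
Qed.

Lemma deficit_gap_ge0 (z : R) : 0 <= z < 1 -> 0 <= moment - (A 1 - A z) / (1 - z).
Proof.
move=> z01; have /andP[z_ge0 /ltW z_le1] := z01.
have z01' : 0 <= z <= 1 by rewrite z_ge0 z_le1.
rewrite -(cvg_lim _ (series_deficit_cvg z01)) //; apply: limr_ge.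
  exact: cvgP (series_deficit_cvg z01).
apply: nearW => n; apply: sumr_ge0 => t _; rewrite mulr_ge0 //.
by have [] := geom_sum_deficit t z01'.
Qed.

Lemma deficit_gap_le (z : R) N : 0 <= z < 1 ->
  moment - (A 1 - A z) / (1 - z) <=
  (moment - series (fun t => t%:R * a t) N) + (1 - z) * series (fun t => t%:R ^+ 2 * a t) N.
Proof.
move=> z01; have /andP[z_ge0 /ltW z_le1] := z01.
have z01' : 0 <= z <= 1 by rewrite z_ge0 z_le1.
rewrite -(cvg_lim _ (series_deficit_cvg z01)) //; apply: limr_le.
  exact: cvgP (series_deficit_cvg z01).
apply: nearW => n; set w := fun t => a t * deficit z t.
have w_ge0 t : 0 <= w t by rewrite mulr_ge0 //; have [] := geom_sum_deficit t z01'.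
apply: (@le_trans _ _ (series w (n + N))); first exact: le_nnseries w_ge0 (leq_addr _ _).
rewrite series_addn addrC; apply: lerD.
  apply: (@le_trans _ _ (\sum_(N <= k < n + N) k%:R * a k)).
    apply: ler_sum => t _; rewrite /w mulrC ler_wpM2r //.
    by have [] := geom_sum_deficit t z01'.
  rewrite -sub_series_geq ?leq_addl // lerB //; apply: nnseries_le_lim => // t.
  by rewrite mulr_ge0.
rewrite /series /= mulr_sumr; apply: ler_sum => t _.
by rewrite /w mulrA [leLHS]mulrC ler_wpM2r //; have [] := geom_sum_deficit t z01'.
Qed.

Lemma powser_quotient_cvg_at_left1 : (A 1 - A z) / (1 - z) @[z --> 1^'-] --> moment.
Proof.
apply/cvgrPdist_le => e e_gt0.
have [N _ tail_small] := (cvgrPdist_le _ _).1 moment_cvg (e / 2) (divr_gt0 e_gt0 (ltr0Sn _ 1)).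
set C := series (fun t => t%:R ^+ 2 * a t) N.
have C_ge0 : 0 <= C by apply: sumr_ge0 => t _; rewrite mulr_ge0 ?exprn_ge0.
have d_gt0 : 0 < e / 2 / (C + 1) by rewrite !divr_gt0 // ltr_wpDl.
near=> z.
have z_lt1 : z < 1 by near: z; exact: nbhs_left_lt.
have z_ge0 : 0 <= z by apply: ltW; near: z; apply: nbhs_left_gt; exact: ltr01.
have z_near : 1 - e / 2 / (C + 1) < z by near: z; apply: nbhs_left_gt; rewrite ltrBlDr ltrDl.
have z01 : 0 <= z < 1 by rewrite z_ge0 z_lt1.
rewrite ger0_norm ?deficit_gap_ge0 //; apply: le_trans (deficit_gap_le N z01) _.
rewrite [X in _ <= X](splitr e); apply: lerD.
  by apply: le_trans (tail_small N (leqnn N)); exact: ler_norm.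
apply: (@le_trans _ _ (e / 2 / (C + 1) * C)).
  by rewrite ler_wpM2r // ltW // ltrBlDr addrC -ltrBlDr.
by rewrite mulrAC ler_pdivrMr ?ltr_wpDl // ler_pM2l ?divr_gt0 // lerDl.
Unshelve. all: by end_near.
Qed.

End DifferenceQuotientAtOne.

Section GeneratingFunction.
Variables (R : realType) (r : nat) (theta : R).
Hypotheses (theta_ge0 : 0 <= theta) (theta_le1 : theta <= 1).
Local Notation p := (hitn r theta).

Lemma series_hitn_step a n : series (p a.+1) n.+1 =
  (1 - theta) * series (p a) n + theta * series (p (a.+1 + r)) n.
Proof.
rewrite seriesSl hitnS0 add0r !seriesEord /= !mulr_sumr -big_split /=.
by apply: eq_bigr => t _; rewrite hitnSS.
Qed.

Lemma series_mean_step a n : series (fun t => t%:R * p a.+1 t) n.+1 =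
  (1 - theta) * (series (fun t => t%:R * p a t) n + series (p a) n) +
  theta * (series (fun t => t%:R * p (a.+1 + r) t) n + series (p (a.+1 + r)) n).
Proof.
rewrite seriesSl mul0r add0r !seriesEord /= -!big_split !mulr_sumr -big_split /=.
by apply: eq_bigr => t _; rewrite hitnSS -natr1; ring.
Qed.

Lemma hitn_ge0 a t : 0 <= p a t.
Proof.
elim: t a => [|t IHt] [|a]; rewrite ?hitn0 ?hitnS0 //.
by rewrite hitnSS addr_ge0 // mulr_ge0 // subr_ge0.
Qed.

Lemma series_hitn_le_root x a n : 0 <= x -> x = (1 - theta) + theta * x ^+ r.+1 ->
  series (p a) n <= x ^+ a.
Proof.
move=> x_ge0 x_root; elim: n a => [|n IHn] [|a]; rewrite ?series0 ?exprn_ge0 //.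
  by rewrite seriesSl hitn0 expr0 seriesEord /= big1 ?addr0 // => t _; rewrite hitn0.
rewrite series_hitn_step.
have -> : x ^+ a.+1 = (1 - theta) * x ^+ a + theta * x ^+ (a.+1 + r).
  by rewrite addSnnS exprD exprS [X in X * _]x_root; ring.
by rewrite lerD // ler_wpM2l ?subr_ge0.
Qed.

Lemma series_hitn_le1 a n : series (p a) n <= 1.
Proof. by rewrite -(expr1n R a) series_hitn_le_root // expr1n; ring. Qed.

Definition genf a (z : R) : R := limn (series (fun t => p a t * z ^+ t)).

Lemma genf_abs_cvg a (z : R) : `|z| <= 1 -> cvgn (series (fun t => `|p a t * z ^+ t|)).
Proof.
move=> z_le1; apply: (@nnseries_bounded_cvg _ _ 1) => // n.
apply: le_trans (series_hitn_le1 a n); apply: ler_sum => t _.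
by rewrite normrM normrX ger0_norm ?hitn_ge0 // ler_piMr ?hitn_ge0 ?exprn_ile1.
Qed.

Lemma genf_cvg a (z : R) : `|z| <= 1 -> series (fun t => p a t * z ^+ t) @ \oo --> genf a z.
Proof. by move=> z_le1; apply: normed_cvg; exact: genf_abs_cvg. Qed.

Lemma genfD a b (z : R) : `|z| <= 1 -> genf (a + b) z = genf a z * genf b z.
Proof.
move=> z_le1; apply: cvg_lim => //.
have -> : (fun t => p (a + b) t * z ^+ t) =
          conv (fun t => p a t * z ^+ t) (fun t => p b t * z ^+ t).
  apply: funext => t; rewrite /conv hitnD mulr_suml; apply: eq_bigr => i _.
  by rewrite -mulrACA -exprD subnKC // -ltnS.
by apply: cvg_series_conv; exact: genf_abs_cvg.
Qed.

Lemma genf0 (z : R) : genf 0 z = 1.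
Proof.
apply: cvg_lim => //; rewrite -cvg_shiftS; apply: cvg_near_cst; apply: nearW => n /=.
rewrite seriesSl hitn0 mul1r expr0 seriesEord /= big1 ?addr0 // => t _.
by rewrite hitn0 mul0r.
Qed.

Lemma genfX a (z : R) : `|z| <= 1 -> genf a z = genf 1 z ^+ a.
Proof.
move=> z_le1; elim: a => [|a IHa]; first by rewrite genf0 expr0.
by rewrite -add1n genfD // IHa exprS.
Qed.

Lemma genf1_fixpoint (z : R) : `|z| <= 1 ->
  genf 1 z = z * (1 - theta) + z * theta * genf 1 z ^+ r.+1.
Proof.
move=> z_le1; have first_step n :
    z * (1 - theta) * series (fun t => p 0 t * z ^+ t) n +
    z * theta * series (fun t => p (1 + r) t * z ^+ t) n =
    series (fun t => p 1 t * z ^+ t) n.+1.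
  rewrite seriesSl hitnS0 mul0r add0r !seriesEord /= !mulr_sumr -big_split /=.
  by apply: eq_bigr => t _; rewrite hitnSS exprS; ring.
have first_step_cvg : series (fun t => p 1 t * z ^+ t) @ \oo -->
    z * (1 - theta) * genf 0 z + z * theta * genf (1 + r) z.
  rewrite -cvg_shiftS -(eq_cvg _ _ first_step).
  by apply: cvgD; apply: cvgM; try exact: cvg_cst; exact: genf_cvg z_le1.
by rewrite {1}/genf (cvg_lim _ first_step_cvg) // genf0 mulr1 (genfX (1 + r)) // add1n.
Qed.

End GeneratingFunction.

Section Mean.
Variables (R : realType) (r : nat) (theta rho : R).
Hypotheses (r_gt0 : (0 < r)%N) (theta_gt0 : 0 < theta) (theta_lt1 : theta < 1).
Hypotheses (rho_ge0 : 0 <= rho) (rho_lt1 : rho < 1).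
Hypothesis rho_root : rho = (1 - theta) + theta * rho ^+ r.+1.
Local Notation p := (hitn r theta).
Local Notation genf := (genf r theta).
Let theta_ge0 : 0 <= theta. Proof. exact: ltW. Qed.
Let theta_le1 : theta <= 1. Proof. exact: ltW. Qed.

Let rho_rootE : theta * rho ^+ r.+1 = rho - (1 - theta).
Proof. by rewrite {2}rho_root; ring. Qed.

Lemma rho_gt0 : 0 < rho.
Proof.
apply: lt_le_trans (_ : 1 - theta <= rho); first by rewrite subr_gt0.
by rewrite [X in _ <= X]rho_root lerDl mulr_ge0 ?exprn_ge0.
Qed.

Lemma theta_geom_sum : theta * \sum_(i < r.+1) rho ^+ i = 1.
Proof.
have rho_neq1 : 1 - rho != 0 by rewrite subr_eq0 gt_eqF.
apply: (mulfI rho_neq1); rewrite mulrCA -subr1X mulrBr mulr1 rho_rootE; ring.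
Qed.

Lemma slope_lt1 : theta * r.+1%:R * rho ^+ r < 1.
Proof.
rewrite -[X in _ < X]theta_geom_sum -mulrA ltr_pM2l // big_ord_recl expr0 -natr1 addrC.
rewrite mulrDl mul1r ltr_leD ?exprn_ilt1 -?lt0n //.
rewrite mulr_natl -[X in _ *+ X](card_ord r) -sumr_const; apply: ler_sum => i _.
by rewrite ler_wiXn2l ?(ltW rho_lt1) // lift0.
Qed.

Definition denom := (1 - theta) * r.+1%:R - r%:R * rho.

Lemma denomE : denom = rho * (1 - theta * r.+1%:R * rho ^+ r).
Proof.
have -> : rho * (1 - theta * r.+1%:R * rho ^+ r) = rho - r.+1%:R * (theta * rho ^+ r.+1).
  by rewrite exprS; ring.
by rewrite rho_rootE /denom -natr1; ring.
Qed.

Lemma denom_gt0 : 0 < denom.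
Proof. by rewrite denomE mulr_gt0 ?rho_gt0 // subr_gt0 slope_lt1. Qed.

(* rho is the only root in [0, rho]: on that interval the map
   x |-> (1 - theta) + theta x^(r+1) has slope at most
   theta (r+1) rho^r < 1. *)
Lemma root_unique x : 0 <= x -> x <= rho -> x = (1 - theta) + theta * x ^+ r.+1 -> x = rho.
Proof.
move=> x_ge0 x_le x_root.
set S := \sum_(i < r.+1) rho ^+ (r.+1.-1 - i) * x ^+ i.
have S_le : S <= r.+1%:R * rho ^+ r.
  rewrite mulr_natl -[X in _ *+ X](card_ord r.+1) -sumr_const; apply: ler_sum => i _ /=.
  have -> : rho ^+ r = rho ^+ (r - i) * rho ^+ i by rewrite -exprD subnK // -ltnS.
  by rewrite ler_wpM2l ?exprn_ge0 // lerXn2r.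
have diff : rho - x = theta * ((rho - x) * S).
  by rewrite -subrXX {1}rho_root {1}x_root; ring.
have : (rho - x) * (1 - theta * S) = 0 by rewrite mulrBr mulr1 {1}diff; ring.
move/eqP; rewrite mulf_eq0 subr_eq0 => /orP[/eqP // | ].
rewrite subr_eq0 => /eqP thetaS; have := slope_lt1; rewrite -mulrA ltNge.
by rewrite [X in X <= _]thetaS ler_wpM2l.
Qed.

Lemma series_hitn_genf1 a : series (p a) @ \oo --> genf a 1.
Proof.
have one_pow n : series (fun t => p a t * 1 ^+ t) n = series (p a) n.
  by rewrite !seriesEord /=; apply: eq_bigr => t _; rewrite expr1n mulr1.
by rewrite -(eq_cvg _ _ one_pow); apply: genf_cvg; rewrite ?normr1.
Qed.

Lemma genf11 : genf 1 1 = rho.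
Proof.
have mass_cvg := series_hitn_genf1 (a := 1); apply: root_unique.
- rewrite -(cvg_lim _ mass_cvg) //; apply: limr_ge; first exact: cvgP mass_cvg.
  by apply: nearW => n; apply: sumr_ge0 => t _; exact: hitn_ge0.
- rewrite -(cvg_lim _ mass_cvg) //; apply: limr_le; first exact: cvgP mass_cvg.
  by apply: nearW => n; rewrite -[X in _ <= X]expr1 series_hitn_le_root.
- by rewrite [LHS]genf1_fixpoint ?normr1 // !mul1r.
Qed.

Lemma series_hitn_cvg a : series (p a) @ \oo --> rho ^+ a.
Proof. by rewrite -genf11 -genfX ?normr1 //; exact: series_hitn_genf1. Qed.

Local Notation tp a := (fun t => t%:R * p a t).

Lemma tp_ge0 a t : 0 <= tp a t.
Proof. by rewrite mulr_ge0 ?hitn_ge0. Qed.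

Lemma tp0 t : tp 0 t = 0.
Proof. by rewrite /= hitn0; case: t => [|t]; rewrite ?mul0r ?mulr0. Qed.

(* The bound is the exact value a rho^a (rho / denom) of the mean: the
   first-step recursion preserves it with equality. *)
Lemma series_mean_le a n : series (tp a) n <= a%:R * rho ^+ a * (rho / denom).
Proof.
have bound_ge0 b : 0 <= b%:R * rho ^+ b * (rho / denom).
  by rewrite !mulr_ge0 ?exprn_ge0 // ltW // invr_gt0 denom_gt0.
elim: n a => [|n IHn] [|a]; rewrite ?series0 ?bound_ge0 //.
  by rewrite seriesEord /= big1 ?bound_ge0 // => t _; exact: tp0.
rewrite series_mean_step.
apply: (@le_trans _ _ ((1 - theta) * (a%:R * rho ^+ a * (rho / denom) + rho ^+ a) +
    theta * ((a.+1 + r)%:R * rho ^+ (a.+1 + r) * (rho / denom) + rho ^+ (a.+1 + r)))).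
  by apply: lerD; apply: ler_wpM2l; rewrite ?subr_ge0 //; apply: lerD => //;
    exact: series_hitn_le_root.
have K_denom : rho / denom * denom = rho by rewrite mulfVK // gt_eqF // denom_gt0.
rewrite le_eqVlt -subr_eq0; apply/orP; left; apply/eqP.
rewrite exprS addSnnS exprD; move: (rho / denom) K_denom => K K_denom.
move: (rho ^+ a) (rho ^+ r.+1) rho_rootE => X Y thetaY.
transitivity (X * (rho - K * denom) +
              X * (1 + (a + r.+1)%:R * K) * (theta * Y - (rho - (1 - theta)))).
  by rewrite /denom !natrD -!natr1; ring.
by rewrite K_denom thetaY !subrr !mulr0 addr0.
Qed.

Definition mean a := limn (series (tp a)).

Lemma mean_cvg a : series (tp a) @ \oo --> mean a.
Proof. by apply: (nnseries_bounded_cvg (tp_ge0 a)); exact: series_mean_le. Qed.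

Lemma mean0 : mean 0 = 0.
Proof.
apply: lim_near_cst => //; apply: nearW => n.
by rewrite seriesEord /= big1 // => t _; exact: tp0.
Qed.

Lemma meanD a b : mean (a + b) = mean a * rho ^+ b + rho ^+ a * mean b.
Proof.
have split_tp n : series (conv (tp a) (p b)) n + series (conv (p a) (tp b)) n =
                  series (tp (a + b)) n.
  rewrite !seriesEord /= -big_split; apply: eq_bigr => t _ /=.
  rewrite /conv hitnD mulr_sumr -big_split; apply: eq_bigr => i _ /=.
  have -> : t%:R = i%:R + (t - i)%:R :> R by rewrite -natrD subnKC // -ltnS.
  ring.
apply: cvg_lim => //; rewrite -(eq_cvg _ _ split_tp).
by apply: cvgD; apply: cvg_series_conv_nn;
  by [exact: tp_ge0 | exact: hitn_ge0 | exact: mean_cvg | exact: series_hitn_cvg].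
Qed.

Lemma mean1 : mean 1 = rho + theta * mean (1 + r).
Proof.
have first_step_cvg : series (tp 1) @ \oo -->
    (1 - theta) * (mean 0 + rho ^+ 0) + theta * (mean (1 + r) + rho ^+ (1 + r)).
  rewrite -cvg_shiftS -(eq_cvg _ _ (fun n => esym (series_mean_step r theta 0 n))).
  by apply: cvgD; apply: cvgM; try exact: cvg_cst; apply: cvgD;
    [exact: mean_cvg | exact: series_hitn_cvg | exact: mean_cvg | exact: series_hitn_cvg].
rewrite {1}/mean (cvg_lim _ first_step_cvg) // mean0 add0r mulr1 mulrDr add1n rho_rootE.
ring.
Qed.

Lemma mean_mulr_rho a : mean a * rho = a%:R * rho ^+ a * mean 1.
Proof.
elim: a => [|a IHa]; first by rewrite mean0 !mul0r.
rewrite -add1n meanD expr1 mulrDl -mulrA (mulrC (rho ^+ a)) -mulrA IHa natrD exprS; ring.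
Qed.

Lemma mean1E : mean 1 = rho ^+ 2 / denom.
Proof.
have denom_neq0 : denom != 0 by rewrite gt_eqF // denom_gt0.
apply/(canRL (mulfK denom_neq0)).
have := mean_mulr_rho (1 + r); rewrite add1n => mean_r.
have : mean 1 * rho = rho ^+ 2 + theta * (mean r.+1 * rho) by rewrite {1}mean1 add1n; ring.
rewrite mean_r => mean1_rho.
have -> : mean 1 * denom = mean 1 * rho - r.+1%:R * mean 1 * (theta * rho ^+ r.+1).
  by rewrite rho_rootE /denom -natr1; ring.
by rewrite {1}mean1_rho exprS; ring.
Qed.

Lemma cond_exp_walk_hit u : cond_exp (walk_hit 1 r u%:Z) theta = (u%:R * mean 1 / rho)%:E.
Proof.
rewrite /cond_exp /Efin /Pfin (sum_EFin_cvg (mean_cvg (a := u))).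
rewrite (sum_EFin_cvg (series_hitn_cvg (a := u))) /=.
have rho_neq0 : rho != 0 by rewrite gt_eqF // rho_gt0.
rewrite -(mulfK rho_neq0 (mean u)) mean_mulr_rho; congr EFin.
by field; rewrite rho_neq0 expf_neq0.
Qed.

Lemma cond_exp_walk_hitE u :
  cond_exp (walk_hit 1 r u%:Z) theta = (u%:R * rho / denom)%:E.
Proof.
rewrite cond_exp_walk_hit mean1E; congr EFin.
by field; rewrite !gt_eqF ?rho_gt0 ?denom_gt0.
Qed.

Lemma genf_quotient_cvg : (genf 1 1 - genf 1 z) / (1 - z) @[z --> 1^'-] --> mean 1.
Proof.
apply: powser_quotient_cvg_at_left1; first exact: hitn_ge0.
  exact: cvgP (series_hitn_cvg (a := 1)).
exact: cvgP (mean_cvg (a := 1)).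
Qed.

End Mean.

Lemma phiE (R : realType) r (theta : R) : phi r theta = genf r theta 1.
Proof. by apply: funext => z; rewrite /genf seriesEord. Qed.

Theorem lemma3p4 (R : realType) (r : nat) (theta rho : R) :
  (0 < r)%N -> (r.+1%:R)^-1 < theta -> theta < 1 ->
  0 <= rho -> rho < 1 -> rho = (1 - theta) + theta * rho ^+ r.+1 ->
  [/\ 0 < rho,
      (forall z : R, -1 <= z <= 1 ->
         phi r theta z = z * (1 - theta) + z * theta * phi r theta z ^+ r.+1),
      (exists d : R,
         ((phi r theta 1 - phi r theta z) / (1 - z) @[z --> (1 : R)^'-] --> d) /\
         (forall u : nat,
            cond_exp (walk_hit 1 r u%:Z) theta = (u%:R * d / rho)%:E /\
            cond_exp (walk_hit 1 r u%:Z) theta =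
              (u%:R * rho / ((1 - theta) * r.+1%:R - r%:R * rho))%:E)) &
      (forall alpha beta : nat, (0 < alpha + beta)%N ->
         q alpha beta 1 r theta =
         cond_exp (walk_hit 1 r (r%:Z * alpha%:Z - beta%:Z + 1)) theta)].
Proof.
move=> r_gt0 theta_gt_inv theta_lt1 rho_ge0 rho_lt1 rho_root.
have theta_gt0 : 0 < theta by apply: lt_trans theta_gt_inv; rewrite invr_gt0 ltr0Sn.
have cond_exp_mean := cond_exp_walk_hit r_gt0 theta_gt0 theta_lt1 rho_ge0 rho_lt1 rho_root.
have cond_exp_val := cond_exp_walk_hitE r_gt0 theta_gt0 theta_lt1 rho_ge0 rho_lt1 rho_root.
split.
- exact: rho_gt0 theta_gt0 theta_lt1 rho_ge0 rho_root.
- move=> z z_le1; rewrite phiE.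
  by apply: genf1_fixpoint; [exact: ltW | exact: ltW | rewrite ler_norml].
- exists (mean r theta 1); split.
    rewrite phiE.
    exact: genf_quotient_cvg r_gt0 theta_gt0 theta_lt1 rho_ge0 rho_lt1 rho_root.
  by move=> u; split; [exact: cond_exp_mean | exact: cond_exp_val].
- move=> alpha beta alpha_beta_gt0; congr cond_exp; apply: funext => s.
  by rewrite trust_quit_walk_hit // mul1r.
Qed.
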